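(* Let $(V,g)$ be a $4$-dimensional oriented Euclidean vector space and let $R \in \operatorname{Sym}^2_B(\Lambda^2 V)$ be Einstein. Denote by $R_\pm$ the restriction of $R$ to $\Lambda^\pm V$ and by $L_\pm$ the orthogonal projection of $L \in \Lambda^2 V$ onto $\Lambda^\pm V$. Then $$ |LR|^2 = |L_+ R_+|^2 + |L_- R_-|^2 \quad \text{for all } L \in \Lambda^2 V. $$ In particular, suppose $e_1,\ldots,e_4$ is an oriented orthonormal basis of $V$ such that the orthonormal basis $\Xi_1 = \frac{1}{\sqrt 2}(e_1\wedge e_2 + e_3 \wedge e_4)$, $\Xi_2 = \frac{1}{\sqrt 2}(e_1\wedge e_3 - e_2 \wedge e_4)$, $\Xi_3 = \frac{1}{\sqrt 2}(e_1\wedge e_4 + e_2 \wedge e_3)$ of $\Lambda^+ V$ and $\Xi_4 = \frac{1}{\sqrt 2}(e_1\wedge e_2 - e_3 \wedge e_4)$, $\Xi_5 = \frac{1}{\sqrt 2}(e_1\wedge e_3 + e_2 \wedge e_4)$, $\Xi_6 = \frac{1}{\sqrt 2}(e_1\wedge e_4 - e_2 \wedge e_3)$ of $\Lambda^- V$ diagonalizes $R$, with $R(\Xi_\alpha,\cdot) = \lambda_\alpha g(\Xi_\alpha,\cdot)$. If $L = \sum_{\alpha=1}^6 a_\alpha \Xi_\alpha$, then $$ |LR|^2 = 4 \sum_{\gamma=1}^6 a_\gamma^2 (\lambda_\alpha - \lambda_\beta)^2 \leq 4(\lambda_{\max} - \lambda_{\min})^2 |L|^2, $$ where for each $\gamma$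 the indices $\alpha < \beta$ are such that $\{\alpha,\beta,\gamma\} = \{1,2,3\}$ or $\{4,5,6\}$.
   Context: $\mathfrak{so}(V)$ is identified with $\Lambda^2 V$ via $(X \wedge Y)(Z) = g(X,Z)Y - g(Y,Z)X$; $\Lambda^2 V$ has the inner product making $\{e_i\wedge e_j\}_{i<j}$ orthonormal. $\operatorname{Sym}^2_B(\Lambda^2 V)$ is the space of symmetric bilinear forms $R$ on $\Lambda^2 V$ whose associated tensor $\operatorname{Rm}(x,y,z,w) = R(x\wedge y, z\wedge w)$ satisfies the first Bianchi identity; $R$ is Einstein if $\operatorname{Ric}(Y,W) = \sum_i \operatorname{Rm}(Y,e_i,W,e_i)$ is a multiple of $g$. $\Lambda^\pm V$ are the $\pm 1$ eigenspaces of the Hodge star. $L$ acts on $\Lambda^2 V$ by $L(x\wedge y) = Lx\wedge y + x\wedge Ly$ (this preserves $\Lambda^\pm V$ for $L \in \Lambda^\pm V$), and on symmetric bilinear forms $S$ on $\Lambda^2 V$ (or on $\Lambda^\pm V$) by $(LS)(\xi,\eta) = -S(L\xi,\eta) - S(\xi,L\eta)$; norms of such forms are $|S|^2 = \sum_{\alpha,\beta} S(\Xi_\alpha,\Xi_\beta)^2$ over an orthonormal basis, and $\lambda_{\max},\lambda_{\min}$ are the largest and smallest eigenvalues of $R$. *)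

(* Model: (V,g) = column vectors 'cV[K]_4 over a real closed
   field K with the standard dot product and the standard orientation;
   Lambda^2 V = skewsym-symmetric 4x4 matrices, X /\ Y being the endomorphism
   Z |-> g(X,Z) Y - g(Y,Z) X. *)
From HB Require Import structures.
From mathcomp Require Import all_boot all_order all_algebra.
Set Implicit Arguments. Unset Strict Implicit. Unset Printing Implicit Defensive.
Import Order.TTheory GRing.Theory Num.Theory.
Local Open Scope ring_scope.

Section Defs.
Variable K : rcfType.

Definition vec := 'cV[K]_4.
Definition bivec := 'M[K]_4.

Definition stde (i : 'I_4) : vec := delta_mx i 0.

Definition g (x y : vec) : K := \sum_(i < 4) x i 0 * y i 0.

Definition skewsym (A : bivec) : Prop := A^T = - A.

Definition wedge (x y : vec) : bivec := y *m x^T - x *m y^T.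

(* inner product on Lambda^2 V making {e_i /\ e_j}_{i<j} orthonormal:
   the coefficient of e_i /\ e_j in A is A j i *)
Definition ip (A B : bivec) : K :=
  \sum_(i < 4) \sum_(j < 4 | (i < j)%N) A j i * B j i.

Definition eps (i j k l : 'I_4) : K :=
  \det (\matrix_(r < 4, c < 4) ((c == nth i [:: i; j; k; l] r)%:R : K)).

Definition hodge (A : bivec) : bivec :=
  \matrix_(a < 4, b < 4) (2^-1 * \sum_(i < 4) \sum_(j < 4) eps i j a b * A i j).

Definition proj_plus (A : bivec) : bivec := 2^-1 *: (A + hodge A).
Definition proj_minus (A : bivec) : bivec := 2^-1 *: (A - hodge A).

(* action of L in Lambda^2 V on Lambda^2 V: the linear extension of
   L (x /\ y) = L x /\ y + x /\ L y  (note xi = sum_{i,j} xi_ji/2 e_i /\ e_j) *)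
Definition actL (L xi : bivec) : bivec :=
  \sum_(i < 4) \sum_(j < 4)
     (xi j i / 2) *: (wedge (L *m stde i) (stde j) + wedge (stde i) (L *m stde j)).

Definition act_form (L : bivec) (S : bivec -> bivec -> K) : bivec -> bivec -> K :=
  fun xi eta => - S (actL L xi) eta - S xi (actL L eta).

Definition Rm (R : bivec -> bivec -> K) (x y z w : vec) : K := R (wedge x y) (wedge z w).

Definition sym_bilinear (R : bivec -> bivec -> K) : Prop :=
  (forall xi eta, skewsym xi -> skewsym eta -> R xi eta = R eta xi) /\
  (forall (a : K) xi1 xi2 eta, skewsym xi1 -> skewsym xi2 -> skewsym eta ->
      R (a *: xi1 + xi2) eta = a * R xi1 eta + R xi2 eta).

Definition bianchi (R : bivec -> bivec -> K) : Prop :=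
  forall x y z w : vec, Rm R x y z w + Rm R y z x w + Rm R z x y w = 0.

Definition Ric (R : bivec -> bivec -> K) (y w : vec) : K :=
  \sum_(i < 4) Rm R y (stde i) w (stde i).

Definition einstein (R : bivec -> bivec -> K) : Prop :=
  exists c : K, forall y w : vec, Ric R y w = c * g y w.

(* the bases Xi_1..Xi_6 (0-indexed) built from a basis e = columns of Q *)
Definition XiN (Q : 'M[K]_4) (n : nat) : bivec :=
  let e := fun k : nat => col (inord k) Q in
  (Num.sqrt 2)^-1 *:
  match n with
  | 0 => wedge (e 0%N) (e 1%N) + wedge (e 2%N) (e 3%N)
  | 1 => wedge (e 0%N) (e 2%N) - wedge (e 1%N) (e 3%N)
  | 2 => wedge (e 0%N) (e 3%N) + wedge (e 1%N) (e 2%N)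
  | 3 => wedge (e 0%N) (e 1%N) - wedge (e 2%N) (e 3%N)
  | 4 => wedge (e 0%N) (e 2%N) + wedge (e 1%N) (e 3%N)
  | _ => wedge (e 0%N) (e 3%N) - wedge (e 1%N) (e 2%N)
  end.

Definition Xi (Q : 'M[K]_4) (a : 'I_6) : bivec := XiN Q a.

Definition stdL2 (p : 'I_6) : bivec :=
  match nat_of_ord p with
  | 0 => wedge (stde (inord 0)) (stde (inord 1))
  | 1 => wedge (stde (inord 0)) (stde (inord 2))
  | 2 => wedge (stde (inord 0)) (stde (inord 3))
  | 3 => wedge (stde (inord 1)) (stde (inord 2))
  | 4 => wedge (stde (inord 1)) (stde (inord 3))
  | _ => wedge (stde (inord 2)) (stde (inord 3))
  end.

(* squared norms of bilinear forms, over orthonormal bases of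
   Lambda^2 V, Lambda^+ V, Lambda^- V respectively *)
Definition normsq2 (S : bivec -> bivec -> K) : K :=
  \sum_(a < 6) \sum_(b < 6) (S (stdL2 a) (stdL2 b)) ^+ 2.
Definition normsqP (S : bivec -> bivec -> K) : K :=
  \sum_(a < 3) \sum_(b < 3) (S (XiN 1%:M a) (XiN 1%:M b)) ^+ 2.
Definition normsqM (S : bivec -> bivec -> K) : K :=
  \sum_(a < 3) \sum_(b < 3) (S (XiN 1%:M (a + 3)%N) (XiN 1%:M (b + 3)%N)) ^+ 2.

Definition is_eigenvalue (R : bivec -> bivec -> K) (mu : K) : Prop :=
  exists xi : bivec, [/\ skewsym xi, xi != 0 &
    forall eta, skewsym eta -> R xi eta = mu * ip xi eta].
Definition is_max_eigenvalue R mu :=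
  is_eigenvalue R mu /\ forall nu, is_eigenvalue R nu -> nu <= mu.
Definition is_min_eigenvalue R mu :=
  is_eigenvalue R mu /\ forall nu, is_eigenvalue R nu -> mu <= nu.

End Defs.

(* for gamma (0-indexed), the two other indices alpha < beta of its triple *)
Definition partA (c : nat) : nat :=
  match c with 0 => 1 | 1 => 0 | 2 => 0 | 3 => 4 | 4 => 3 | _ => 3 end.
Definition partB (c : nat) : nat :=
  match c with 0 => 2 | 1 => 2 | 2 => 1 | 3 => 5 | 4 => 5 | _ => 4 end.

(* On skew matrices the action L (x /\ y) = L x /\ y + x /\ L y is the
   commutator [L, _], and the inner product of Lambda^2 V is ad-invariant.  In dimension
   four the Einstein condition says exactly that R commutes with the Hodge star, so R has
   no Lambda^+ x Lambda^- block.  Since [Lambda^+, Lambda^-] = 0 and [Lambda^pm, Lambda^pm]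
   is contained in Lambda^pm, the form LR is block diagonal with blocks L_+ R_+ and L_- R_-;
   computing |LR|^2 in the orthonormal basis Xi (for Q = 1) adapted to Lambda^+ + Lambda^-
   gives the first identity.  If Xi is an eigenbasis of R, ad-invariance gives
   (LR)(Xi_a, Xi_b) = (lambda_a - lambda_b) <[L, Xi_a], Xi_b>, and the structure constants
   of so(3) + so(3) in the basis Xi are 0 or +-sqrt 2, which yields the formula and the
   bound. *)

From HB Require Import structures.
From mathcomp Require Import all_boot all_order all_algebra.
From mathcomp.algebra_tactics Require Import ring lra.
Import Order.TTheory GRing.Theory Num.Theory.
Local Open Scope ring_scope.
Set Implicit Arguments. Unset Strict Implicit. Unset Printing Implicit Defensive.

Ltac case_ord4 i := let Hi := fresh "Hi" in case: i => [[|[|[|[|?]]]] Hi] //.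
Ltac case_ord6 i := let Hi := fresh "Hi" in case: i => [[|[|[|[|[|[|?]]]]]] Hi] //.
Ltac expand_sums := rewrite ?(big_ord_recl, big_ord0) /bump /addn /=.

Section SkewMatrices.
Variable K : rcfType.
Implicit Types (A B C L Q X Y : 'M[K]_4).

Definition lie A B : 'M[K]_4 := A *m B - B *m A.

Lemma skewsym_entry A i j : skewsym A -> A j i = - A i j.
Proof. by move/(congr1 (fun M : 'M[K]_4 => M i j)); rewrite !mxE. Qed.

Lemma skewsym_lin a A B : skewsym A -> skewsym B -> skewsym (a *: A + B).
Proof. by move=> hA hB; rewrite /skewsym linearD linearZ /= hA hB scalerN opprD. Qed.

Lemma skewsym0 : skewsym (0 : 'M[K]_4).
Proof. by rewrite /skewsym trmx0 oppr0. Qed.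

Lemma skewsymZ a A : skewsym A -> skewsym (a *: A).
Proof. by move=> hA; rewrite -[_ *: _]addr0; apply: skewsym_lin hA skewsym0. Qed.

Lemma skewsymD A B : skewsym A -> skewsym B -> skewsym (A + B).
Proof. by move=> hA hB; rewrite -[A]scale1r; apply: skewsym_lin. Qed.

Lemma skewsym_sum n (c : 'I_n -> K) (X : 'I_n -> 'M[K]_4) :
  (forall i, skewsym (X i)) -> skewsym (\sum_(i < n) c i *: X i).
Proof.
by move=> hX; apply: (big_ind (@skewsym K)) => [|A B|i _];
  [exact: skewsym0 | exact: skewsymD | exact: skewsymZ].
Qed.

Lemma skewsym_lie A B : skewsym A -> skewsym B -> skewsym (lie A B).
Proof. by move=> hA hB; rewrite /skewsym linearB /= !trmx_mul hA hB !mulmxN !mulNmx !opprK opprB. Qed.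

Lemma skewsym_conj Q A : skewsym A -> skewsym (Q *m A *m Q^T).
Proof. by move=> hA; rewrite /skewsym !trmx_mul trmxK hA mulNmx mulmxN mulmxA. Qed.

Lemma lieC A B : lie A B = - lie B A.
Proof. by rewrite /lie opprB. Qed.

Lemma lieDl A B C : lie (A + B) C = lie A C + lie B C.
Proof. by rewrite /lie mulmxDl mulmxDr opprD addrACA. Qed.

Lemma lieZ a b A B : lie (a *: A) (b *: B) = (a * b) *: lie A B.
Proof. by rewrite /lie -!scalemxAl -!scalemxAr !scalerA mulrC scalerBr. Qed.

Lemma lie_conj Q A B : Q^T *m Q = 1%:M ->
  lie (Q *m A *m Q^T) (Q *m B *m Q^T) = Q *m lie A B *m Q^T.
Proof.
move=> hQ; rewrite /lie mulmxBr mulmxBl !mulmxA.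
by rewrite -!(mulmxA _ Q^T Q) hQ !mulmx1.
Qed.

Lemma conj_lincomb Q n (c : 'I_n -> K) (X : 'I_n -> 'M[K]_4) :
  Q *m (\sum_(i < n) c i *: X i) *m Q^T = \sum_(i < n) c i *: (Q *m X i *m Q^T).
Proof.
rewrite mulmx_sumr mulmx_suml; apply: eq_bigr => i _.
by rewrite -scalemxAr -scalemxAl.
Qed.

Lemma wedge_mul Q (u v : 'cV[K]_4) : wedge (Q *m u) (Q *m v) = Q *m wedge u v *m Q^T.
Proof. by rewrite /wedge !trmx_mul mulmxBr mulmxBl !mulmxA. Qed.

Lemma wedge_stde i j : wedge (stde K i) (stde K j) = delta_mx j i - delta_mx i j.
Proof. by rewrite /wedge /stde !trmx_delta !mul_delta_mx. Qed.

Lemma lie_derivation L u v : skewsym L ->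
  wedge (L *m u) v + wedge u (L *m v) = lie L (wedge u v).
Proof.
move=> hL; rewrite /wedge /lie !trmx_mul hL !mulmxN mulmxBr mulmxBl !mulmxA.
move: (v *m _ *m L) (L *m u *m _) (L *m v *m _) (u *m _ *m L) => a b c d.
by apply/matrixP => i j; rewrite !mxE; ring.
Qed.

Lemma skewsym_wedge_expansion X : skewsym X ->
  \sum_(i < 4) \sum_(j < 4) (X j i / 2) *: wedge (stde K i) (stde K j) = X.
Proof.
have half Y : \sum_i \sum_j (Y i j / 2) *: delta_mx i j = 2^-1 *: Y :> 'M[K]_4.
  rewrite [in RHS](matrix_sum_delta Y) scaler_sumr; apply: eq_bigr => i _.
  by rewrite scaler_sumr; apply: eq_bigr => j _; rewrite scalerA mulrC.
move=> hX; transitivity (\sum_(i < 4) \sum_(j < 4)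
    ((X j i / 2) *: delta_mx j i + (X i j / 2) *: delta_mx i j)).
  apply: eq_bigr => i _; apply: eq_bigr => j _.
  by rewrite wedge_stde scalerBr -scaleNr -mulNr -(skewsym_entry j i hX).
under eq_bigr do rewrite big_split /=.
rewrite big_split /= [X in X + _]exchange_big /= !half -scalerDl.
by rewrite (_ : 2^-1 + 2^-1 = 1) ?scale1r //; field.
Qed.

Lemma actLE L X : skewsym L -> skewsym X -> actL L X = lie L X.
Proof.
move=> hL hX; rewrite -{2}(skewsym_wedge_expansion hX) /actL /lie.
rewrite mulmx_sumr mulmx_suml -sumrB; apply: eq_bigr => i _.
rewrite mulmx_sumr mulmx_suml -sumrB; apply: eq_bigr => j _.
by rewrite lie_derivation // /lie -scalemxAr -scalemxAl scalerBr.
Qed.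

Lemma ip_sym A B : ip A B = ip B A.
Proof. by apply: eq_bigr => i _; apply: eq_bigr => j _; rewrite mulrC. Qed.

Lemma ipZ a b A B : ip (a *: A) (b *: B) = a * b * ip A B.
Proof.
rewrite /ip mulr_sumr; apply: eq_bigr => i _; rewrite mulr_sumr.
by apply: eq_bigr => j _; rewrite !mxE; ring.
Qed.

Lemma ip_suml n (c : 'I_n -> K) (X : 'I_n -> 'M[K]_4) B :
  ip (\sum_(k < n) c k *: X k) B = \sum_(k < n) c k * ip (X k) B.
Proof.
rewrite /ip; under eq_bigr do under eq_bigr do rewrite summxE mulr_suml.
under eq_bigr do rewrite exchange_big /=.
rewrite exchange_big /=; apply: eq_bigr => k _; rewrite mulr_sumr.
by apply: eq_bigr => i _; rewrite mulr_sumr; apply: eq_bigr => j _; rewrite !mxE mulrA.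
Qed.

Lemma ip_orthonormal_sum n (u : 'I_n -> 'M[K]_4) (c : 'I_n -> K) :
  (forall a b, ip (u a) (u b) = (a == b)%:R) ->
  ip (\sum_(a < n) c a *: u a) (\sum_(a < n) c a *: u a) = \sum_(a < n) c a ^+ 2.
Proof.
move=> orth; rewrite ip_suml; apply: eq_bigr => a _; rewrite ip_sym ip_suml.
rewrite (bigD1 a) //= big1 => [|b /negPf nab]; first by rewrite orth eqxx addr0 expr2 mulr1.
by rewrite orth nab mulr0.
Qed.

End SkewMatrices.

Section Coordinates.
Variable K : rcfType.
Implicit Types (A B L Q X Y : 'M[K]_4) (x y : nat -> K).

(* Coordinate n of a bivector is its coefficient on stdL2 n, i.e. the entry
   (coord_row n, coord_col n) for the pairs (1,0), (2,0), (3,0), (2,1), (3,1), (3,2). *)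
Definition bivec_entry x (i j : nat) : K :=
  match i, j with
  | 1, 0 => x 0%N | 0, 1 => - x 0%N
  | 2, 0 => x 1%N | 0, 2 => - x 1%N
  | 3, 0 => x 2%N | 0, 3 => - x 2%N
  | 2, 1 => x 3%N | 1, 2 => - x 3%N
  | 3, 1 => x 4%N | 1, 3 => - x 4%N
  | 3, 2 => x 5%N | 2, 3 => - x 5%N
  | _, _ => 0 end.

Definition bivec_of x : 'M[K]_4 := \matrix_(i < 4, j < 4) bivec_entry x i j.

Definition coord_row (n : nat) : 'I_4 :=
  match n with 0 => @Ordinal 4 1 isT | 1 | 3 => @Ordinal 4 2 isT | _ => @Ordinal 4 3 isT end.
Definition coord_col (n : nat) : 'I_4 :=
  match n with 0 | 1 | 2 => @Ordinal 4 0 isT | 3 | 4 => @Ordinal 4 1 isT | _ => @Ordinal 4 2 isT end.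

Definition bicoord A (n : nat) : K := A (coord_row n) (coord_col n).

Definition unit_coord (p n : nat) : K := (n == p)%:R.

Lemma skewsym_bivec_of x : skewsym (bivec_of x).
Proof. by apply/matrixP => i j; rewrite !mxE; case_ord4 i; case_ord4 j; rewrite /= ?opprK ?oppr0. Qed.

Lemma mx_entry_val A i j i' j' : val i = val i' -> val j = val j' -> A i j = A i' j'.
Proof. by move=> /val_inj -> /val_inj ->. Qed.

Lemma bicoordK A : skewsym A -> bivec_of (bicoord A) = A.
Proof.
move=> hA; have diag0 i : A i i = 0 by have := skewsym_entry i i hA; lra.
apply/matrixP => i j; rewrite !mxE /bicoord.
case_ord4 i; case_ord4 j; rewrite /=;
  first [ by apply: mx_entry_val
        | by rewrite -(skewsym_entry _ _ hA); apply: mx_entry_val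
        | by rewrite -(diag0 (Ordinal Hi)); apply: mx_entry_val ].
Qed.

Lemma eq_bivec_of x y : (forall n, (n < 6)%N -> x n = y n) -> bivec_of x = bivec_of y.
Proof. by move=> e; apply/matrixP => i j; rewrite !mxE; case_ord4 i; case_ord4 j; rewrite /= e. Qed.

Lemma bivec_of0 : bivec_of \0 = 0.
Proof. by apply/matrixP => i j; rewrite !mxE; case_ord4 i; case_ord4 j; rewrite /= oppr0. Qed.

Lemma bivec_ofD x y : bivec_of x + bivec_of y = bivec_of (x \+ y).
Proof. by apply/matrixP => i j; rewrite !mxE; case_ord4 i; case_ord4 j; rewrite /= ?addr0 ?opprD. Qed.

Lemma bivec_ofZ a x : a *: bivec_of x = bivec_of (a \*o x).
Proof. by apply/matrixP => i j; rewrite !mxE; case_ord4 i; case_ord4 j; rewrite /= ?mulr0 ?mulrN. Qed.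

Lemma bivec_of_lincomb n (c : 'I_n -> K) (w : 'I_n -> nat -> K) :
  \sum_(i < n) c i *: bivec_of (w i) = bivec_of (fun k => \sum_(i < n) c i * w i k).
Proof.
elim: n c w => [|n IH] c w; first by rewrite big_ord0 -bivec_of0; apply: eq_bivec_of => k _; rewrite big_ord0.
rewrite big_ord_recr /= IH bivec_ofZ bivec_ofD; apply: eq_bivec_of => k _ /=.
by rewrite [RHS]big_ord_recr.
Qed.

Definition lie_coord x y (n : nat) : K :=
  match n with
  | 0 => x 1%N * y 3%N - x 3%N * y 1%N + x 2%N * y 4%N - x 4%N * y 2%N
  | 1 => x 3%N * y 0%N - x 0%N * y 3%N + x 2%N * y 5%N - x 5%N * y 2%N
  | 2 => x 4%N * y 0%N - x 0%N * y 4%N + x 5%N * y 1%N - x 1%N * y 5%N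
  | 3 => x 0%N * y 1%N - x 1%N * y 0%N + x 4%N * y 5%N - x 5%N * y 4%N
  | 4 => x 0%N * y 2%N - x 2%N * y 0%N + x 5%N * y 3%N - x 3%N * y 5%N
  | _ => x 1%N * y 2%N - x 2%N * y 1%N + x 3%N * y 4%N - x 4%N * y 3%N
  end.

Lemma lie_bivec_of x y : lie (bivec_of x) (bivec_of y) = bivec_of (lie_coord x y).
Proof.
apply/matrixP => i j; rewrite !mxE; expand_sums; rewrite !mxE.
by case_ord4 i; case_ord4 j; rewrite /=; ring.
Qed.

Lemma stdL2_bivec_of (p : 'I_6) : stdL2 K p = bivec_of (unit_coord p).
Proof.
apply/matrixP => r c; rewrite /stdL2 /wedge /stde.
by case_ord6 p; rewrite !(mxE, big_ord_recl, big_ord0) -!val_eqE /= ?inordK //;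
  case_ord4 r; case_ord4 c; rewrite /unit_coord /=; ring.
Qed.

Lemma bivec_of_sum x : bivec_of x = \sum_(p < 6) x p *: stdL2 K p.
Proof.
apply/matrixP => i j; rewrite summxE; under eq_bigr do rewrite stdL2_bivec_of.
by expand_sums; rewrite !mxE; case_ord4 i; case_ord4 j; rewrite /unit_coord /=; ring.
Qed.

Lemma ip_bivec_of x y : ip (bivec_of x) (bivec_of y) = \sum_(p < 6) x p * y p.
Proof.
by rewrite /ip; under eq_bigr do rewrite big_mkcond; expand_sums; rewrite !mxE /=; ring.
Qed.

Lemma ip_trace A B : skewsym A -> skewsym B -> ip A B = - 2^-1 * \tr (A *m B).
Proof.
move=> /bicoordK <- /bicoordK <-; rewrite ip_bivec_of /mxtrace.
by expand_sums; rewrite !mxE; expand_sums; rewrite !mxE /=; field.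
Qed.

Lemma ip_lie L X Y : skewsym L -> skewsym X -> skewsym Y ->
  ip (lie L X) Y = - ip X (lie L Y).
Proof.
move=> hL hX hY; have sLX := skewsym_lie hL hX; have sLY := skewsym_lie hL hY.
rewrite !ip_trace // /lie mulmxBl mulmxBr !linearB /=.
by rewrite -!mulmxA [X *m (Y *m L)]mulmxA [\tr (X *m Y *m L)]mxtrace_mulC; ring.
Qed.

Lemma ip_conj Q A B : Q^T *m Q = 1%:M -> skewsym A -> skewsym B ->
  ip (Q *m A *m Q^T) (Q *m B *m Q^T) = ip A B.
Proof.
move=> hQ hA hB; have sQA := skewsym_conj Q hA; have sQB := skewsym_conj Q hB.
rewrite !ip_trace //; congr (_ * _).
by rewrite !mulmxA -(mulmxA _ Q^T Q) hQ mulmx1 mxtrace_mulC !mulmxA hQ mul1mx.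
Qed.

Definition pair_index (a i : nat) : nat :=
  match a, i with
  | 0, 1 | 1, 0 => 0 | 0, 2 | 2, 0 => 1 | 0, 3 | 3, 0 => 2
  | 1, 2 | 2, 1 => 3 | 1, 3 | 3, 1 => 4 | _, _ => 5 end.

Definition pair_sign (a i : nat) : K := if (a < i)%N then 1 else if (i < a)%N then -1 else 0.

Lemma wedge_stde_unit (a i : 'I_4) :
  wedge (stde K a) (stde K i) = pair_sign a i *: bivec_of (unit_coord (pair_index a i)).
Proof.
rewrite wedge_stde; apply/matrixP => r c; rewrite !mxE.
by case_ord4 r; case_ord4 c; case_ord4 a; case_ord4 i; rewrite /pair_sign /unit_coord /=; ring.
Qed.

End Coordinates.

Section SymmetricBilinearForms.
Variable K : rcfType.
Variable S : bivec K -> bivec K -> K.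
Hypothesis symS : sym_bilinear S.
Implicit Types (L X Y : 'M[K]_4) (x y : nat -> K).

Definition gram (p q : nat) : K := S (bivec_of (unit_coord K p)) (bivec_of (unit_coord K q)).
Arguments gram : simpl never.

(* Only the Gram entries with p <= q occur, so that ring sees the symmetry of S. *)
Definition gram_upper (p q : nat) : K := if (p <= q)%N then gram p q else gram q p.

Lemma sym_bilinear0l Y : skewsym Y -> S 0 Y = 0.
Proof.
move=> hY; have := symS.2 1 0 0 Y (skewsym0 K) (skewsym0 K) hY.
by rewrite scale1r addr0 mul1r => h; lra.
Qed.

Lemma sym_bilinear_linr a X1 X2 Y : skewsym X1 -> skewsym X2 -> skewsym Y ->
  S Y (a *: X1 + X2) = a * S Y X1 + S Y X2.
Proof.
move=> h1 h2 hY; have h12 := skewsym_lin a h1 h2.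
by rewrite symS.1 // symS.2 // !(symS.1 Y).
Qed.

Lemma sym_bilinearNr X Y : skewsym X -> skewsym Y -> S X (- Y) = - S X Y.
Proof.
have h0 := skewsym0 K.
move=> hX hY; rewrite -[- Y]addr0 -scaleN1r sym_bilinear_linr //.
by rewrite (symS.1 X 0) // sym_bilinear0l //; ring.
Qed.

Lemma sym_bilinearZ a b X Y : skewsym X -> skewsym Y -> S (a *: X) (b *: Y) = a * b * S X Y.
Proof.
have Zl c U V : skewsym U -> skewsym V -> S (c *: U) V = c * S U V.
  by move=> hU hV; rewrite -[c *: U]addr0 symS.2 ?sym_bilinear0l ?addr0 //; apply: skewsym0.
move=> hX hY; have hbY := skewsymZ b hY.
by rewrite Zl // symS.1 // Zl // symS.1 // mulrA.
Qed.

Lemma sym_bilinear_suml n (c : 'I_n -> K) (X : 'I_n -> 'M[K]_4) Y :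
  (forall i, skewsym (X i)) -> skewsym Y ->
  S (\sum_(i < n) c i *: X i) Y = \sum_(i < n) c i * S (X i) Y.
Proof.
move=> hX hY; elim: n c X hX => [|n IH] c X hX; first by rewrite !big_ord0 sym_bilinear0l.
rewrite !big_ord_recr /= addrC symS.2 ?IH ?(addrC (c _ * _)) //.
exact: skewsym_sum.
Qed.

Lemma sym_bilinear_sumr n (c : 'I_n -> K) (X : 'I_n -> 'M[K]_4) Y :
  (forall i, skewsym (X i)) -> skewsym Y ->
  S Y (\sum_(i < n) c i *: X i) = \sum_(i < n) c i * S Y (X i).
Proof.
move=> hX hY; rewrite symS.1 ?sym_bilinear_suml //; last exact: skewsym_sum.
by apply: eq_bigr => i _; rewrite symS.1.
Qed.

Lemma gram_upperE p q : gram_upper p q = gram p q.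
Proof. by rewrite /gram_upper; case: (leqP p q) => // _; apply: symS.1; apply: skewsym_bivec_of. Qed.

Lemma sym_bilinear_coord x y :
  S (bivec_of x) (bivec_of y) = \sum_(p < 6) \sum_(q < 6) x p * y q * gram_upper p q.
Proof.
have hE p : skewsym (stdL2 K p) by rewrite stdL2_bivec_of; apply: skewsym_bivec_of.
rewrite [bivec_of x]bivec_of_sum sym_bilinear_suml //; last exact: skewsym_bivec_of.
apply: eq_bigr => p _; rewrite [bivec_of y]bivec_of_sum sym_bilinear_sumr // mulr_sumr.
by apply: eq_bigr => q _; rewrite gram_upperE !stdL2_bivec_of mulrA.
Qed.

Lemma normsq2_orthonormal (u : 'I_6 -> 'M[K]_4) :
  (forall a, skewsym (u a)) -> (forall a b, ip (u a) (u b) = (a == b)%:R) ->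
  \sum_(a < 6) \sum_(b < 6) S (u a) (u b) ^+ 2 = normsq2 S.
Proof.
move=> hu orth.
pose P : 'M[K]_6 := \matrix_(a, p) bicoord (u a) p.
pose G : 'M[K]_6 := \matrix_(p, q) gram_upper p q.
have sum_sq (M : 'M[K]_6) : \sum_a \sum_b M a b ^+ 2 = \tr (M *m M^T).
  by apply: eq_bigr => a _; rewrite mxE; apply: eq_bigr => b _; rewrite mxE expr2.
have entry a b : S (u a) (u b) = (P *m G *m P^T) a b.
  rewrite -(bicoordK (hu a)) -(bicoordK (hu b)) sym_bilinear_coord mxE.
  under [RHS]eq_bigr do rewrite mxE mulr_suml.
  rewrite exchange_big /=; apply: eq_bigr => p _; apply: eq_bigr => q _.
  by rewrite !mxE; ring.
have PPt : P *m P^T = 1%:M.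
  apply/matrixP => a b; rewrite !mxE -orth -(bicoordK (hu a)) -(bicoordK (hu b)).
  by rewrite ip_bivec_of; apply: eq_bigr => p _; rewrite !mxE.
have PtP : P^T *m P = 1%:M by apply: mulmx1C.
have -> : normsq2 S = \sum_p \sum_q G p q ^+ 2.
  by apply: eq_bigr => p _; apply: eq_bigr => q _; rewrite !stdL2_bivec_of mxE gram_upperE.
under eq_bigr do under eq_bigr do rewrite entry.
rewrite !sum_sq !trmx_mul !trmxK -!mulmxA (mulmxA P^T) PtP mul1mx.
by rewrite mxtrace_mulC -!mulmxA PtP mulmx1.
Qed.

Lemma skewsym_actL L X : skewsym L -> skewsym X -> skewsym (actL L X).
Proof. by move=> hL hX; rewrite actLE //; apply: skewsym_lie. Qed.

Lemma actL_lin L a X1 X2 : skewsym L -> skewsym X1 -> skewsym X2 ->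
  actL L (a *: X1 + X2) = a *: actL L X1 + actL L X2.
Proof.
move=> hL h1 h2; have h12 := skewsym_lin a h1 h2; rewrite !actLE // /lie.
by rewrite mulmxDr mulmxDl -scalemxAr -scalemxAl scalerBr addrACA opprD.
Qed.

Lemma sym_bilinear_act_form L : skewsym L -> sym_bilinear (act_form L S).
Proof.
move=> hL; split=> [X Y hX hY | a X1 X2 Y h1 h2 hY]; rewrite /act_form.
  have sX := skewsym_actL hL hX; have sY := skewsym_actL hL hY.
  by rewrite symS.1 // (symS.1 X) // addrC.
have s1 := skewsym_actL hL h1; have s2 := skewsym_actL hL h2; have sY := skewsym_actL hL hY.
by rewrite actL_lin // !symS.2 //; ring.
Qed.

End SymmetricBilinearForms.

Section HodgeStar.
Variable K : rcfType.
Implicit Types (A B : 'M[K]_4) (x : nat -> K).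

Definition inversions (i j k l : nat) : nat :=
  (j < i) + (k < i) + (l < i) + (k < j) + (l < j) + (l < k).

Lemma eps_nonuniq (i j k l : 'I_4) : ~~ uniq [:: i; j; k; l] -> eps K i j k l = 0.
Proof.
case/(uniqPn i) => r1 [r2 [lt12 lt2 eq12]].
have lt1 : (r1 < 4)%N by apply: ltn_trans lt2.
apply: (@determinant_alternate _ _ _ (Ordinal lt1) (Ordinal lt2)) => [|c].
  by rewrite -val_eqE /= ltn_eqF.
by rewrite !mxE /= eq12.
Qed.

Lemma eps_uniq (i j k l : 'I_4) :
  uniq [:: i; j; k; l] -> eps K i j k l = (-1) ^+ inversions i j k l.
Proof.
rewrite /eps; case_ord4 i; case_ord4 j; case_ord4 k; case_ord4 l => _;
  do 4 rewrite (expand_det_row _ ord0) !big_ord_recl big_ord0 /cofactor !mxE /=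
            ?mul0r ?add0r ?addr0;
  by rewrite det_mx00 /inversions /=; ring.
Qed.

Lemma eps_val (i j k l : 'I_4) :
  eps K i j k l = if uniq [:: i; j; k; l] then (-1) ^+ inversions i j k l else 0.
Proof. by case: ifP => [/eps_uniq | /negbT /eps_nonuniq]. Qed.

Definition hodge_coord (x : nat -> K) (n : nat) : K :=
  match n with 0 => x 5%N | 1 => - x 4%N | 2 => x 3%N | 3 => x 2%N | 4 => - x 1%N | _ => x 0%N end.

Lemma hodge_bivec_of x : hodge (bivec_of x) = bivec_of (hodge_coord x).
Proof.
apply/matrixP => a b; rewrite !mxE.
under eq_bigr do under eq_bigr do rewrite mxE eps_val.
by expand_sums; case_ord4 a; case_ord4 b; rewrite /inversions /=; field.
Qed.

Definition selfdual A := hodge A = A.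
Definition antiselfdual A := hodge A = - A.

Lemma proj_plus_minus A : proj_plus A + proj_minus A = A.
Proof. by apply/matrixP => i j; rewrite !mxE; field. Qed.

Lemma proj_plus_bivec_of x :
  proj_plus (bivec_of x) = bivec_of (2^-1 \*o (x \+ hodge_coord x)).
Proof. by rewrite /proj_plus hodge_bivec_of bivec_ofD bivec_ofZ. Qed.

Lemma proj_minus_bivec_of x :
  proj_minus (bivec_of x) = bivec_of (2^-1 \*o (x \- hodge_coord x)).
Proof.
rewrite /proj_minus hodge_bivec_of -scaleN1r bivec_ofZ bivec_ofD bivec_ofZ.
by apply: eq_bivec_of => n _ /=; ring.
Qed.

Lemma selfdual_proj_plus A : skewsym A -> selfdual (proj_plus A).
Proof.
move=> /bicoordK <-; rewrite /selfdual proj_plus_bivec_of hodge_bivec_of.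
by apply: eq_bivec_of => -[|[|[|[|[|[|n]]]]]] //= _; ring.
Qed.

Lemma antiselfdual_proj_minus A : skewsym A -> antiselfdual (proj_minus A).
Proof.
move=> /bicoordK <-; rewrite /antiselfdual proj_minus_bivec_of hodge_bivec_of -scaleN1r bivec_ofZ.
by apply: eq_bivec_of => -[|[|[|[|[|[|n]]]]]] //= _; ring.
Qed.

Lemma skewsym_proj_plus A : skewsym A -> skewsym (proj_plus A).
Proof. by move=> /bicoordK <-; rewrite proj_plus_bivec_of; apply: skewsym_bivec_of. Qed.

Lemma skewsym_proj_minus A : skewsym A -> skewsym (proj_minus A).
Proof. by move=> /bicoordK <-; rewrite proj_minus_bivec_of; apply: skewsym_bivec_of. Qed.

Lemma lie_proj_plus_minus A B : skewsym A -> skewsym B ->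
  lie (proj_plus A) (proj_minus B) = 0.
Proof.
move=> /bicoordK <- /bicoordK <-.
rewrite proj_plus_bivec_of proj_minus_bivec_of lie_bivec_of -bivec_of0.
by apply: eq_bivec_of => -[|[|[|[|[|[|n]]]]]] //= _; ring.
Qed.

Lemma selfdual_lie_proj_plus A B : skewsym A -> skewsym B ->
  selfdual (lie (proj_plus A) (proj_plus B)).
Proof.
move=> /bicoordK <- /bicoordK <-.
rewrite /selfdual !proj_plus_bivec_of lie_bivec_of hodge_bivec_of.
by apply: eq_bivec_of => -[|[|[|[|[|[|n]]]]]] //= _; ring.
Qed.

Lemma antiselfdual_lie_proj_minus A B : skewsym A -> skewsym B ->
  antiselfdual (lie (proj_minus A) (proj_minus B)).
Proof.
move=> /bicoordK <- /bicoordK <-.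
rewrite /antiselfdual !proj_minus_bivec_of lie_bivec_of hodge_bivec_of -scaleN1r bivec_ofZ.
by apply: eq_bivec_of => -[|[|[|[|[|[|n]]]]]] //= _; ring.
Qed.

Lemma proj_plus_selfdual A : selfdual A -> proj_plus A = A.
Proof. by rewrite /proj_plus => ->; apply/matrixP => i j; rewrite !mxE; field. Qed.

Lemma proj_minus_antiselfdual A : antiselfdual A -> proj_minus A = A.
Proof. by rewrite /proj_minus => ->; apply/matrixP => i j; rewrite !mxE; field. Qed.

Lemma lie_selfdual_antiselfdual A B : skewsym A -> skewsym B ->
  selfdual A -> antiselfdual B -> lie A B = 0.
Proof.
move=> hA hB sdA asdB.
by rewrite -(proj_plus_selfdual sdA) -(proj_minus_antiselfdual asdB) lie_proj_plus_minus.
Qed.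

Lemma selfdual_lie A B : skewsym A -> skewsym B ->
  selfdual A -> selfdual B -> selfdual (lie A B).
Proof.
move=> hA hB sdA sdB.
by rewrite -(proj_plus_selfdual sdA) -(proj_plus_selfdual sdB); apply: selfdual_lie_proj_plus.
Qed.

Lemma antiselfdual_lie A B : skewsym A -> skewsym B ->
  antiselfdual A -> antiselfdual B -> antiselfdual (lie A B).
Proof.
move=> hA hB asdA asdB.
rewrite -(proj_minus_antiselfdual asdA) -(proj_minus_antiselfdual asdB).
exact: antiselfdual_lie_proj_minus.
Qed.

End HodgeStar.

Section Einstein.
Variable K : rcfType.
Variable R : bivec K -> bivec K -> K.
Hypotheses (symR : sym_bilinear R) (einR : einstein R).

Lemma Ric_stde (a b : 'I_4) : Ric R (stde K a) (stde K b) =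
  \sum_(i < 4) pair_sign K a i * pair_sign K b i * gram R (pair_index a i) (pair_index b i).
Proof.
by apply: eq_bigr => i _; rewrite /Rm !wedge_stde_unit sym_bilinearZ //; apply: skewsym_bivec_of.
Qed.

Lemma einstein_hodge X Y : skewsym X -> skewsym Y -> R (hodge X) (hodge Y) = R X Y.
Proof.
move=> hX hY; have [c ric] := einR.
have ric_ab a b (ha : (a < 4)%N) (hb : (b < 4)%N) := ric (stde K (Ordinal ha)) (stde K (Ordinal hb)).
have := ric_ab 0 0 isT isT; have := ric_ab 1 1 isT isT; have := ric_ab 2 2 isT isT.
have := ric_ab 3 3 isT isT; have := ric_ab 0 1 isT isT; have := ric_ab 0 2 isT isT.
have := ric_ab 0 3 isT isT; have := ric_ab 1 2 isT isT; have := ric_ab 1 3 isT isT.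
have := ric_ab 2 3 isT isT.
rewrite !Ric_stde /g; expand_sums; rewrite !mxE /pair_sign /= => *.
(* The ten equations Ric (e_a, e_b) = c g (e_a, e_b) identify each Gram entry with the
   entry of the Hodge duals. *)
have r00 : gram R 5 5 = gram R 0 0 by lra.
have r11 : gram R 4 4 = gram R 1 1 by lra.
have r22 : gram R 3 3 = gram R 2 2 by lra.
have r01 : gram R 4 5 = - gram R 0 1 by lra.
have r02 : gram R 3 5 = gram R 0 2 by lra.
have r12 : gram R 3 4 = - gram R 1 2 by lra.
have r03 : gram R 2 5 = gram R 0 3 by lra.
have r13 : gram R 2 4 = - gram R 1 3 by lra.
have r04 : gram R 1 5 = - gram R 0 4 by lra.
rewrite -(bicoordK hX) -(bicoordK hY) !hodge_bivec_of !sym_bilinear_coord //.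
by expand_sums; rewrite /gram_upper /= r00 r11 r22 r01 r02 r12 r03 r13 r04; ring.
Qed.

Lemma einstein_selfdual_antiselfdual X Y : skewsym X -> skewsym Y ->
  selfdual X -> antiselfdual Y -> R X Y = 0.
Proof.
move=> hX hY sdX asdY; have := einstein_hodge hX hY.
by rewrite sdX asdY sym_bilinearNr //; lra.
Qed.

End Einstein.

Section XiBasis.
Variable K : rcfType.

Definition xi_coord (a n : nat) : K :=
  match a with
  | 0 => match n with 0 | 5 => 1 | _ => 0 end
  | 1 => match n with 1 => 1 | 4 => -1 | _ => 0 end
  | 2 => match n with 2 | 3 => 1 | _ => 0 end
  | 3 => match n with 0 => 1 | 5 => -1 | _ => 0 end
  | 4 => match n with 1 | 4 => 1 | _ => 0 end
  | _ => match n with 2 => 1 | 3 => -1 | _ => 0 end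
  end.

Lemma inv_sqrt2_sq : (Num.sqrt (2 : K))^-1 * (Num.sqrt 2)^-1 = 2^-1.
Proof. by rewrite -invfM -expr2 sqr_sqrtr // ler0n. Qed.

Lemma Xi1_bivec_of n : XiN (1%:M : 'M[K]_4) n = (Num.sqrt 2)^-1 *: bivec_of (xi_coord n).
Proof.
have e k : col (inord k) (1%:M : 'M[K]_4) = stde K (inord k) by rewrite colE mul1mx.
rewrite /XiN; congr (_ *: _).
case: n => [|[|[|[|[|n]]]]] /=; rewrite !e !wedge_stde_unit !inordK // /pair_sign /=;
  rewrite -?scaleN1r !bivec_ofZ bivec_ofD;
  by apply: eq_bivec_of => -[|[|[|[|[|[|m]]]]]] //= _; rewrite /unit_coord /=; ring.
Qed.

Lemma skewsym_Xi1 n : skewsym (XiN (1%:M : 'M[K]_4) n).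
Proof. by rewrite Xi1_bivec_of; apply/skewsymZ/skewsym_bivec_of. Qed.

Lemma ip_Xi1 (a b : 'I_6) : ip (Xi 1%:M a) (Xi 1%:M b) = (a == b)%:R :> K.
Proof.
rewrite /Xi !Xi1_bivec_of ipZ inv_sqrt2_sq ip_bivec_of.
by case_ord6 a; case_ord6 b; expand_sums; field.
Qed.

Lemma selfdual_Xi1 n : (n < 3)%N -> selfdual (XiN (1%:M : 'M[K]_4) n).
Proof.
rewrite /selfdual Xi1_bivec_of bivec_ofZ hodge_bivec_of => lt_n3.
by apply: eq_bivec_of => -[|[|[|[|[|[|m]]]]]] //= _; case: n lt_n3 => [|[|[|n]]] //= _; ring.
Qed.

Lemma antiselfdual_Xi1 n : (3 <= n)%N -> antiselfdual (XiN (1%:M : 'M[K]_4) n).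
Proof.
rewrite /antiselfdual Xi1_bivec_of -scaleN1r !bivec_ofZ hodge_bivec_of => le3n.
by apply: eq_bivec_of => -[|[|[|[|[|[|m]]]]]] //= _; case: n le3n => [|[|[|[|[|n]]]]] //= _; ring.
Qed.

Lemma Xi_conj (Q : 'M[K]_4) a : Xi Q a = Q *m Xi 1%:M a *m Q^T.
Proof.
rewrite /Xi /XiN -scalemxAr -scalemxAl; congr (_ *: _).
by case: (nat_of_ord a) => [|[|[|[|[|n]]]]]; rewrite !colE !mul1mx !wedge_mul;
  first [rewrite [in RHS]mulmxBr [in RHS]mulmxBl | rewrite [in RHS]mulmxDr [in RHS]mulmxDl].
Qed.

Lemma skewsym_Xi (Q : 'M[K]_4) a : skewsym (Xi Q a).
Proof. by rewrite Xi_conj; apply/skewsym_conj/skewsym_Xi1. Qed.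

Lemma ip_Xi (Q : 'M[K]_4) a b : Q^T *m Q = 1%:M -> ip (Xi Q a) (Xi Q b) = (a == b)%:R.
Proof. by move=> hQ; rewrite (Xi_conj Q a) (Xi_conj Q b) ip_conj ?ip_Xi1 //; apply: skewsym_Xi1. Qed.

End XiBasis.

Section SelfDualSplitting.
Variables (K : rcfType) (R : bivec K -> bivec K -> K).
Hypotheses (symR : sym_bilinear R) (einR : einstein R).
Variable L : bivec K.
Hypothesis hL : skewsym L.
Implicit Types X Y : 'M[K]_4.

Let sLp := skewsym_proj_plus hL.
Let sLm := skewsym_proj_minus hL.

Lemma actL_selfdual X : skewsym X -> selfdual X -> actL L X = lie (proj_plus L) X.
Proof.
move=> hX sdX; rewrite actLE // -{1}(proj_plus_minus L) lieDl (lieC (proj_minus L)).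
by rewrite (lie_selfdual_antiselfdual hX sLm sdX (antiselfdual_proj_minus hL)) oppr0 addr0.
Qed.

Lemma actL_antiselfdual X : skewsym X -> antiselfdual X -> actL L X = lie (proj_minus L) X.
Proof.
move=> hX asdX; rewrite actLE // -{1}(proj_plus_minus L) lieDl.
by rewrite (lie_selfdual_antiselfdual sLp hX (selfdual_proj_plus hL) asdX) add0r.
Qed.

Lemma act_form_selfdual X Y : skewsym X -> skewsym Y -> selfdual X -> selfdual Y ->
  act_form L R X Y = act_form (proj_plus L) R X Y.
Proof. by move=> hX hY sdX sdY; rewrite /act_form !actL_selfdual // !actLE. Qed.

Lemma act_form_antiselfdual X Y : skewsym X -> skewsym Y -> antiselfdual X -> antiselfdual Y ->
  act_form L R X Y = act_form (proj_minus L) R X Y.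
Proof. by move=> hX hY asdX asdY; rewrite /act_form !actL_antiselfdual // !actLE. Qed.

Lemma act_form_mixed X Y : skewsym X -> skewsym Y -> selfdual X -> antiselfdual Y ->
  act_form L R X Y = 0.
Proof.
move=> hX hY sdX asdY; rewrite /act_form actL_selfdual // actL_antiselfdual //.
have sdLX := selfdual_lie sLp hX (selfdual_proj_plus hL) sdX.
have asdLY := antiselfdual_lie sLm hY (antiselfdual_proj_minus hL) asdY.
have sLX := skewsym_lie sLp hX; have sLY := skewsym_lie sLm hY.
by rewrite !(einstein_selfdual_antiselfdual symR einR) // subr0 oppr0.
Qed.

Lemma normsq2_act_form_split :
  normsq2 (act_form L R)
  = normsqP (act_form (proj_plus L) R) + normsqM (act_form (proj_minus L) R).
Proof.
have symS := sym_bilinear_act_form symR hL.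
rewrite -(normsq2_orthonormal symS (skewsym_Xi 1%:M) (@ip_Xi1 K)).
rewrite (@big_split_ord _ _ _ 3 3) /=; under eq_bigr do rewrite (@big_split_ord _ _ _ 3 3) /=.
under [X in _ + X]eq_bigr do rewrite (@big_split_ord _ _ _ 3 3) /=.
have sXi := skewsym_Xi (1%:M : 'M[K]_4).
have sdXi (a : 'I_3) : selfdual (Xi 1%:M (lshift 3 a)) := selfdual_Xi1 K (ltn_ord a).
have asdXi (a : 'I_3) : antiselfdual (Xi 1%:M (rshift 3 a)) := antiselfdual_Xi1 K (leq_addr a 3).
congr (_ + _); apply: eq_bigr => a _.
  rewrite [X in _ + X]big1 ?addr0 => [|b _]; last by rewrite act_form_mixed // expr0n.
  by apply: eq_bigr => b _; rewrite act_form_selfdual.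
rewrite big1 ?add0r => [|b _]; last by rewrite symS.1 // act_form_mixed // expr0n.
by apply: eq_bigr => b _; rewrite act_form_antiselfdual // /Xi /= !(addnC 3).
Qed.

End SelfDualSplitting.

Section StructureConstants.
Variable K : rcfType.
Implicit Types (lam coef : 'I_6 -> K).

Definition xi_lincomb (c : nat -> K) (k : nat) : K :=
  match k with
  | 0 => c 0%N + c 3%N | 1 => c 1%N + c 4%N | 2 => c 2%N + c 5%N
  | 3 => c 2%N - c 5%N | 4 => c 4%N - c 1%N | _ => c 0%N - c 3%N end.

(* The matrix of ad (sum_k c_k Xi_k) in the basis Xi is sqrt 2 * ad_xi c: Lambda^+ and
   Lambda^- are two commuting copies of so(3). *)
Definition ad_xi (c : nat -> K) (a b : nat) : K :=
  match a, b with
  | 0, 1 => c 2%N | 1, 0 => - c 2%N | 1, 2 => c 0%N | 2, 1 => - c 0%N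
  | 2, 0 => c 1%N | 0, 2 => - c 1%N | 4, 3 => c 5%N | 3, 4 => - c 5%N
  | 3, 5 => c 4%N | 5, 3 => - c 4%N | 5, 4 => c 3%N | 4, 5 => - c 3%N
  | _, _ => 0 end.

Lemma big_ord6 (F : 'I_6 -> K) :
  \sum_(a < 6) F a = F (inord 0) + F (inord 1) + F (inord 2) + F (inord 3) + F (inord 4) + F (inord 5).
Proof.
rewrite !big_ord_recl big_ord0 addr0 !addrA.
by repeat congr (_ + _); congr F; apply: val_inj; rewrite /= inordK.
Qed.

Lemma lincomb_Xi1 coef : \sum_(c < 6) coef c *: Xi 1%:M c
  = (Num.sqrt 2)^-1 *: bivec_of (xi_lincomb (fun k => coef (inord k))).
Proof.
under eq_bigr do rewrite /Xi Xi1_bivec_of scalerA mulrC -scalerA.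
rewrite -scaler_sumr bivec_of_lincomb; congr (_ *: _); apply: eq_bivec_of => k lt_k6.
by rewrite big_ord6 !inordK //; case: k lt_k6 => [|[|[|[|[|[|k]]]]]] //= _; ring.
Qed.

Lemma inv_sqrt2_cube : 4 * (Num.sqrt 2)^-1 ^+ 3 = Num.sqrt (2 : K).
Proof.
set s := Num.sqrt (2 : K).
have s_neq0 : s != 0 by rewrite gt_eqF // sqrtr_gt0 ltr0n.
have s2 : s * s = 2 by rewrite -expr2 sqr_sqrtr ?ler0n.
rewrite (_ : 4 = 2 * 2); last by ring.
by rewrite -s2; field.
Qed.

Lemma ip_lie_Xi1 coef (a b : 'I_6) :
  ip (lie (\sum_(c < 6) coef c *: Xi 1%:M c) (Xi 1%:M a)) (Xi 1%:M b)
  = Num.sqrt 2 * ad_xi (fun k => coef (inord k)) a b.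
Proof.
rewrite lincomb_Xi1 /Xi !Xi1_bivec_of lieZ ipZ lie_bivec_of ip_bivec_of -[in RHS]inv_sqrt2_cube.
by case_ord6 a; case_ord6 b; expand_sums; ring.
Qed.

Lemma sum_sq_ad_xi (l c : nat -> K) :
  \sum_(a < 6) \sum_(b < 6) ((l a - l b) * ad_xi c a b) ^+ 2
  = 2 * \sum_(g < 6) c g ^+ 2 * (l (partA g) - l (partB g)) ^+ 2.
Proof. by expand_sums; ring. Qed.

End StructureConstants.

Section Eigenbasis.
Variables (K : rcfType) (R : bivec K -> bivec K -> K).
Hypothesis symR : sym_bilinear R.
Implicit Types (L X Y : 'M[K]_4).

Lemma act_form_eigen L X Y mu nu : skewsym L -> skewsym X -> skewsym Y ->
  (forall eta, skewsym eta -> R X eta = mu * ip X eta) ->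
  (forall eta, skewsym eta -> R Y eta = nu * ip Y eta) ->
  act_form L R X Y = (mu - nu) * ip (lie L X) Y.
Proof.
move=> hL hX hY eX eY; have sLX := skewsym_lie hL hX; have sLY := skewsym_lie hL hY.
rewrite /act_form !actLE // (symR.1 (lie L X)) // eX // eY // ip_sym.
by rewrite -(opprK (ip X _)) -ip_lie //; ring.
Qed.

Variables (Q : 'M[K]_4) (lam : 'I_6 -> K).
Hypotheses (hQ : Q^T *m Q = 1%:M)
  (eigen : forall a eta, skewsym eta -> R (Xi Q a) eta = lam a * ip (Xi Q a) eta).

Lemma ip_lie_Xi coef a b :
  ip (lie (\sum_(c < 6) coef c *: Xi Q c) (Xi Q a)) (Xi Q b)
  = ip (lie (\sum_(c < 6) coef c *: Xi 1%:M c) (Xi 1%:M a)) (Xi 1%:M b).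
Proof.
under eq_bigr do rewrite Xi_conj.
have s1 := skewsym_Xi (1%:M : 'M[K]_4).
rewrite -conj_lincomb (Xi_conj Q a) (Xi_conj Q b) lie_conj // ip_conj //; apply: skewsym_lie => //.
exact: skewsym_sum.
Qed.

Lemma normsq2_act_form_Xi coef :
  normsq2 (act_form (\sum_(c < 6) coef c *: Xi Q c) R)
  = 4 * \sum_(c < 6) coef c ^+ 2 * (lam (inord (partA c)) - lam (inord (partB c))) ^+ 2.
Proof.
have sL := skewsym_sum coef (skewsym_Xi Q).
rewrite -(normsq2_orthonormal (sym_bilinear_act_form symR sL) (skewsym_Xi Q) (fun a b => ip_Xi a b hQ)).
pose l k := lam (inord k); pose c k := coef (inord k).
have lamE (a : 'I_6) : lam a = l a by rewrite /l inord_val.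
have sq2 x y : (x * (Num.sqrt 2 * y)) ^+ 2 = 2 * (x * y) ^+ 2 :> K.
  by rewrite !exprMn sqr_sqrtr ?ler0n //; ring.
under eq_bigr => a _ do under eq_bigr => b _ do
  rewrite (act_form_eigen sL (skewsym_Xi Q a) (skewsym_Xi Q b) (eigen a) (eigen b))
          ip_lie_Xi ip_lie_Xi1 sq2 (lamE a) (lamE b).
transitivity (2 * \sum_(a < 6) \sum_(b < 6) ((l a - l b) * ad_xi c a b) ^+ 2).
  by rewrite mulr_sumr; apply: eq_bigr => a _; rewrite mulr_sumr.
rewrite sum_sq_ad_xi mulrA; congr (_ * _); first by rewrite -natrM.
by apply: eq_bigr => g _; rewrite /c inord_val.
Qed.

Lemma is_eigenvalue_Xi a : is_eigenvalue R (lam a).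
Proof.
exists (Xi Q a); split; [exact: skewsym_Xi | | exact: eigen].
apply/eqP => Xi0; have := ip_Xi a a hQ.
by rewrite Xi0 eqxx -(scale0r (0 : 'M[K]_4)) ipZ !mul0r => /eqP; rewrite eq_sym oner_eq0.
Qed.

End Eigenbasis.

Lemma sqr_diff_le (K : realDomainType) (lo hi x y : K) :
  lo <= x <= hi -> lo <= y <= hi -> (x - y) ^+ 2 <= (hi - lo) ^+ 2.
Proof. by move=> /andP[? ?] /andP[? ?]; nra. Qed.

Lemma sum_gap_le (K : realDomainType) (lam coef : 'I_6 -> K) lo hi :
  (forall a, lo <= lam a <= hi) ->
  \sum_(c < 6) coef c ^+ 2 * (lam (inord (partA c)) - lam (inord (partB c))) ^+ 2
  <= (hi - lo) ^+ 2 * \sum_(c < 6) coef c ^+ 2.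
Proof.
move=> lamP; rewrite mulr_sumr; apply: ler_sum => c _; rewrite mulrC.
by apply: ler_wpM2r; [exact: sqr_ge0 | apply: sqr_diff_le].
Qed.

Theorem proposition2p6 (K : rcfType) (R : bivec K -> bivec K -> K) :
  sym_bilinear R -> bianchi R -> einstein R ->
  (forall L : bivec K, skewsym L ->
     normsq2 (act_form L R)
     = normsqP (act_form (proj_plus L) R) + normsqM (act_form (proj_minus L) R)) /\
  (forall (Q : 'M[K]_4), Q^T *m Q = 1%:M -> 0 < \det Q ->
   forall lam : 'I_6 -> K,
   (forall (a : 'I_6) (eta : bivec K), skewsym eta ->
        R (Xi Q a) eta = lam a * ip (Xi Q a) eta) ->
   forall coef : 'I_6 -> K,
   let L := \sum_(a < 6) coef a *: Xi Q a in
   normsq2 (act_form L R)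
     = 4 * \sum_(c < 6) coef c ^+ 2 * (lam (inord (partA c)) - lam (inord (partB c))) ^+ 2
   /\ (forall lmax lmin : K, is_max_eigenvalue R lmax -> is_min_eigenvalue R lmin ->
        normsq2 (act_form L R) <= 4 * (lmax - lmin) ^+ 2 * ip L L)).
Proof.
move=> symR _ einR; split=> [L hL | Q hQ _ lam eigen coef L].
  exact: normsq2_act_form_split.
have normE := normsq2_act_form_Xi symR hQ eigen coef.
split=> // lmax lmin [_ maxP] [_ minP].
rewrite normE ip_orthonormal_sum => [|a b]; last exact: ip_Xi.
rewrite -mulrA ler_wpM2l // sum_gap_le // => a.
by have ev := is_eigenvalue_Xi hQ eigen a; rewrite minP ?maxP.
Qed.
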